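(* Let $X=\{x\in\mathbb{R}^n: l\le x\le u\}$ and $\mathcal{Z}=\{x\in\mathbb{R}^n: x_i\in\mathbb{Z}\ \text{for all } i\in I^z\}$ as in the context. Then the set $\bar D=\bigcup_{x\in X\cap\mathcal{Z}} D^z(x)$ has finitely many elements.
   Context: Let $\{1,\dots,n\}=I^c\cup I^z$ with $I^c\cap I^z=\emptyset$. For $v\in\mathbb{R}^n$ let $v_z=(v_i)_{i\in I^z}$. Let $l,u\in\mathbb{R}^n$ (finite) with $l_i<u_i$ for all $i$ and $l_i,u_i\in\mathbb{Z}$ for $i\in I^z$. A vector $w\in\mathbb{Z}^p$ is called primitive if the greatest common divisor of its components is $1$. For $x\in X\cap\mathcal{Z}$, the set of feasible primitive directions is $D^z(x)=\{d\in\mathbb{Z}^n:\ d_i=0 \text{ for all } i\in I^c,\ d_z \text{ is primitive},\ x+d\in X\cap\mathcal{Z}\}$. *)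

From HB Require Import structures.
From mathcomp Require Import all_boot all_order all_algebra.
From mathcomp Require Import boolp classical_sets cardinality reals.
Set Implicit Arguments. Unset Strict Implicit. Unset Printing Implicit Defensive.
Import Order.TTheory GRing.Theory Num.Theory.
Local Open Scope ring_scope.
Local Open Scope classical_set_scope.

(* Indices {1,...,n} are modelled by 'I_n; Iz : {set 'I_n} is I^z and its
   complement ~: Iz is I^c. Vectors of R^n are functions 'I_n -> R, vectors of
   Z^n are functions 'I_n -> int. *)

Definition boxX (R : realType) (n : nat) (l u : 'I_n -> R) : set ('I_n -> R) :=
  [set x | forall i, l i <= x i <= u i].

Definition Zset (R : realType) (n : nat) (Iz : {set 'I_n}) : set ('I_n -> R) :=
  [set x | forall i, i \in Iz -> x i \is a Num.int].

Definition primitive_z (n : nat) (Iz : {set 'I_n}) (d : 'I_n -> int) : Prop :=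
  (\big[gcdz/0%Z]_(i in Iz) d i)%Z = 1%Z.

Definition Dz (R : realType) (n : nat) (Iz : {set 'I_n}) (l u : 'I_n -> R)
    (x : 'I_n -> R) : set ('I_n -> int) :=
  [set d | (forall i, i \notin Iz -> d i = 0%Z) /\ primitive_z Iz d /\
           (boxX l u `&` @Zset R n Iz) (fun i => x i + (d i)%:~R)].

Definition Dbar (R : realType) (n : nat) (Iz : {set 'I_n}) (l u : 'I_n -> R)
  : set ('I_n -> int) :=
  \bigcup_(x in boxX l u `&` @Zset R n Iz) Dz Iz l u x.

From HB Require Import structures.
From mathcomp Require Import all_boot all_order all_algebra.
From mathcomp Require Import boolp classical_sets cardinality reals.
From mathcomp Require Import lra zify.
Import Order.TTheory GRing.Theory Num.Theory.
Local Open Scope ring_scope.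
Local Open Scope classical_set_scope.

(* If x and x + d both lie in the box X, then every component of d
   is bounded by the width u_i - l_i of the box, so all directions of \bar D lie
   in a bounded, hence finite, set of integer vectors. *)

Lemma absz_le_width (R : realFieldType) (a b x : R) (d : int) :
  a <= x <= b -> a <= x + d%:~R <= b -> ((absz d)%:R : R) <= b - a.
Proof.
move=> /andP[ax xb] /andP[axd xdb].
rewrite natr_absz intr_norm ler_norml; apply/andP; split; lra.
Qed.

Lemma finite_bounded_int_fun (T : finType) (N : nat) :
  finite_set [set d : T -> int | forall i, (absz (d i) <= N)%N].
Proof.
apply: (@sub_finite_set _ _
  [set (fun i => (f i)%:Z - N%:Z) | f in [set: {ffun T -> 'I_(N.*2.+1)}]]).
  move=> d /= d_le; exists [ffun i => inord (absz (d i + N%:Z))] => //.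
  apply/funext => i; have d_i_le := d_le i.
  by rewrite ffunE inordK; lia.
exact: finite_image finite_finset.
Qed.

Lemma Dbar_absz_le (R : realType) (n : nat) (Iz : {set 'I_n})
    (l u : 'I_n -> R) (d : 'I_n -> int) :
  Dbar Iz l u d -> forall i, ((absz (d i))%:R : R) <= u i - l i.
Proof.
move=> [x [x_box _] [_ [_ [xd_box _]]]] i.
exact: absz_le_width (x_box i) (xd_box i).
Qed.

Theorem mainTheorem1 (R : realType) (n : nat) (Iz : {set 'I_n})
  (l u : 'I_n -> R)
  (hlu : forall i, l i < u i)
  (hlz : forall i, i \in Iz -> l i \is a Num.int)
  (huz : forall i, i \in Iz -> u i \is a Num.int) :
  finite_set (Dbar Iz l u).
Proof.
pose N := (\max_(i < n) Num.truncn (u i - l i))%N.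
apply: (sub_finite_set _ (finite_bounded_int_fun _ N)).
move=> d Dd i; apply: leq_trans (leq_bigmax i).
rewrite truncn_ge_nat; last by have := hlu i; lra.
exact: Dbar_absz_le Dd i.
Qed.
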